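(* For each $x\in\Omega$, the set $\bigcup_{n\ge0}T^{-n}(x)$ is dense in $\Omega$.
   Context: Let $I=[0,1)$ with its usual metric $d_I$, fix $\theta\in(0,1)$, and let $\Omega=I^{\mathbb Z}$ with metric $d(x,y)=\sup_{k\in\mathbb Z}\theta^{|k|}d_I(x_k,y_k)$. Let $\tau:I\to I$ have full branches, so that $b=\#\tau^{-1}(t)$ is constant. Assume there is $\eta\in(0,1)$ such that every inverse branch $\zeta$ of $\tau$ satisfies $d_I(\zeta(s),\zeta(t))\le\eta\,d_I(s,t)$. Let $(\bar\tau x)_i=\tau(x_i)$ and let $\sigma$ be the shift $(\sigma x)_i=x_{i+1}$. Let $E:\Omega\to\Omega$ be invertible and suppose there is $C_E\in(0,\eta^{-1})$ with $d(\sigma^nE^{-1}x,\sigma^nE^{-1}y)\le C_E\,d(\sigma^nx,\sigma^ny)$ for all $n\in\mathbb Z$ and $x,y\in\Omega$. The coupled map is $T=E\circ\bar\tau$. *)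

From Stdlib Require Import Reals Lra ZArith ClassicalEpsilon.
Open Scope R_scope.

Definition inI (s : R) : Prop := 0 <= s < 1.

Definition seqZ := Z -> R.
Definition inOmega (x : seqZ) : Prop := forall k : Z, inI (x k).

Definition dterms (theta : R) (x y : seqZ) : R -> Prop :=
  fun v => exists k : Z, v = theta ^ (Z.abs_nat k) * Rabs (x k - y k).

(* d(x,y) = sup_k theta^|k| d_I(x_k,y_k)  (the least upper bound, chosen
   classically; for x, y in Omega it exists since the terms are in [0,1)). *)
Definition dOmega (theta : R) (x y : seqZ) : R :=
  epsilon (inhabits 0) (fun r => is_lub (dterms theta x y) r).

Definition shiftZ (n : Z) (x : seqZ) : seqZ := fun i => x (i + n)%Z.

Definition taubar (tau : R -> R) (x : seqZ) : seqZ := fun i => tau (x i).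

Definition Tmap (E : seqZ -> seqZ) (tau : R -> R) (x : seqZ) : seqZ :=
  E (taubar tau x).

Definition full_branches (tau : R -> R) (b : nat) (a : nat -> R) : Prop :=
  (forall s, inI s -> inI (tau s)) /\
  (1 <= b)%nat /\ a 0%nat = 0 /\ a b = 1 /\
  (forall j, (j < b)%nat -> a j < a (S j)) /\
  (forall j, (j < b)%nat ->
     (forall u v, a j <= u < a (S j) -> a j <= v < a (S j) ->
        tau u = tau v -> u = v) /\
     (forall t, inI t -> exists u, a j <= u < a (S j) /\ tau u = t)).

(* every inverse branch zeta_j (the inverse of tau on [a_j,a_{j+1})) is an
   eta-contraction: d_I(zeta_j s, zeta_j t) <= eta d_I(s,t).  Stated without
   naming zeta_j: for u = zeta_j s, v = zeta_j t. *)
Definition inverse_branches_contract (tau : R -> R) (b : nat) (a : nat -> R)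
  (eta : R) : Prop :=
  forall j, (j < b)%nat ->
    forall u v, a j <= u < a (S j) -> a j <= v < a (S j) ->
      Rabs (u - v) <= eta * Rabs (tau u - tau v).

(* Given x and a target y in Omega, we look for a preimage of x under T^n
   close to y.  One step: take s = E^-1 x and, coordinatewise, pick for each
   k the preimage z_k = zeta_j (s_k) by the inverse branch zeta_j whose domain
   contains y_k.  Since y_k = zeta_j (tau y_k) and zeta_j is an
   eta-contraction, |z_k - y_k| <= eta |s_k - tau y_k|, hence
     d(z, y) <= eta d(E^-1 x, E^-1 (T y)) <= eta C_E d(x, T y).
   Iterating this n times (pulling x back along the forward orbit of y)
   gives z with T^n z = x and d(z, y) <= (eta C_E)^n d(x, T^n y), and since
   eta C_E < 1 and d <= 1 on Omega the right-hand side tends to 0. *)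

From Stdlib Require Import Reals ZArith Lra Lia ClassicalEpsilon FunctionalExtensionality.
Open Scope R_scope.

Section SupMetric.

Variable theta : R.
Hypothesis Htheta : 0 < theta < 1.

Lemma dterm_le1 (x y : seqZ) (k : Z) : inOmega x -> inOmega y ->
  theta ^ Z.abs_nat k * Rabs (x k - y k) <= 1.
Proof.
  intros Hx Hy.
  destruct (Hx k), (Hy k).
  assert (0 <= theta ^ Z.abs_nat k <= 1).
  { split; [apply pow_le; lra|].
    rewrite <- (pow1 (Z.abs_nat k)). apply pow_incr; lra. }
  assert (Rabs (x k - y k) <= 1) by (apply Rabs_le; lra).
  pose proof (Rabs_pos (x k - y k)).
  nra.
Qed.

Lemma dOmega_is_lub (x y : seqZ) : inOmega x -> inOmega y ->
  is_lub (dterms theta x y) (dOmega theta x y).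
Proof.
  intros Hx Hy. unfold dOmega. apply epsilon_spec.
  destruct (completeness (dterms theta x y)) as [m Hm].
  - exists 1. intros v [k ->]. now apply dterm_le1.
  - exists (theta ^ Z.abs_nat 0 * Rabs (x 0%Z - y 0%Z)). now exists 0%Z.
  - now exists m.
Qed.

Lemma dOmega_le1 (x y : seqZ) : inOmega x -> inOmega y ->
  dOmega theta x y <= 1.
Proof.
  intros Hx Hy. destruct (dOmega_is_lub x y Hx Hy) as [_ Hleast].
  apply Hleast. intros v [k ->]. now apply dterm_le1.
Qed.

Lemma dOmega_coordinatewise_le (u v s t : seqZ) (c : R) : 0 <= c ->
  inOmega u -> inOmega v -> inOmega s -> inOmega t ->
  (forall k, Rabs (u k - v k) <= c * Rabs (s k - t k)) ->
  dOmega theta u v <= c * dOmega theta s t.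
Proof.
  intros Hc Hu Hv Hs Ht Hcoord.
  destruct (dOmega_is_lub u v Hu Hv) as [_ Hleast].
  destruct (dOmega_is_lub s t Hs Ht) as [Hub _].
  apply Hleast. intros w [k ->].
  assert (Hw : 0 <= theta ^ Z.abs_nat k) by (apply pow_le; lra).
  assert (Hst : theta ^ Z.abs_nat k * Rabs (s k - t k) <= dOmega theta s t)
    by (apply Hub; now exists k).
  specialize (Hcoord k).
  apply Rle_trans with (theta ^ Z.abs_nat k * (c * Rabs (s k - t k))).
  - now apply Rmult_le_compat_l.
  - replace (theta ^ Z.abs_nat k * (c * Rabs (s k - t k)))
      with (c * (theta ^ Z.abs_nat k * Rabs (s k - t k))) by ring.
    now apply Rmult_le_compat_l.
Qed.

End SupMetric.

(* The 0-th shift is the identity, so the shifted Lipschitz bound on E^-1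
   applies at n = 0 to the unshifted metric. *)
Lemma shiftZ_0 (w : seqZ) : shiftZ 0 w = w.
Proof. extensionality i. unfold shiftZ. now rewrite Z.add_0_r. Qed.

Section FullBranches.

Variables (tau : R -> R) (b : nat) (a : nat -> R) (eta : R).
Hypothesis Hfull : full_branches tau b a.
Hypothesis Hcontr : inverse_branches_contract tau b a eta.

Lemma taubar_Omega (y : seqZ) : inOmega y -> inOmega (taubar tau y).
Proof. intros Hy k. apply (proj1 Hfull), Hy. Qed.

Lemma branch_points_mono (i j : nat) : (i <= j <= b)%nat -> a i <= a j.
Proof.
  destruct Hfull as (_ & _ & _ & _ & Hinc & _).
  intros Hij. induction j.
  - replace i with 0%nat by lia. lra.
  - destruct (Nat.eq_dec i (S j)) as [-> | Hne]; [lra|].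
    assert (a i <= a j) by (apply IHj; lia).
    assert (a j < a (S j)) by (apply Hinc; lia).
    lra.
Qed.

Lemma branch_containing (m : nat) (u : R) : (m <= b)%nat -> a 0%nat <= u < a m ->
  exists j, (j < m)%nat /\ a j <= u < a (S j).
Proof.
  revert u. induction m; intros u Hm Hu; [lra|].
  destruct (Rlt_le_dec u (a m)).
  - destruct (IHm u ltac:(lia) ltac:(lra)) as [j [Hj Hu']].
    exists j. split; [lia | exact Hu'].
  - exists m. split; [lia | lra].
Qed.

(* Near preimage: s has a tau-preimage u within eta |s - tau y| of y,
   namely its image under the inverse branch whose domain contains y. *)
Lemma tau_preimage_near (s y : R) : inI s -> inI y ->
  exists u, inI u /\ tau u = s /\ Rabs (u - y) <= eta * Rabs (s - tau y).
Proof.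
  intros Hs Hy.
  pose proof Hfull as (_ & _ & Ha0 & Hab & _ & Hbranch).
  destruct (branch_containing b y (le_n b)) as [j [Hj Hyj]].
  { destruct Hy. lra. }
  destruct (proj2 (Hbranch j Hj) s Hs) as [u [Huj Hus]].
  assert (0 <= a j) by (rewrite <- Ha0; apply branch_points_mono; lia).
  assert (a (S j) <= 1) by (rewrite <- Hab; apply branch_points_mono; lia).
  exists u. split; [unfold inI; lra | split; [exact Hus |]].
  rewrite <- Hus. now apply (Hcontr j Hj).
Qed.

Lemma taubar_preimage_near (s y : seqZ) : inOmega s -> inOmega y ->
  exists z, inOmega z /\ taubar tau z = s /\
    forall k, Rabs (z k - y k) <= eta * Rabs (s k - taubar tau y k).
Proof.
  intros Hs Hy.
  destruct (choice (fun k u => inI u /\ tau u = s k /\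
                       Rabs (u - y k) <= eta * Rabs (s k - tau (y k))))
    as [z Hz].
  { intro k. now apply tau_preimage_near. }
  exists z. split; [intro k; apply Hz | split].
  - extensionality k. apply Hz.
  - intro k. apply Hz.
Qed.

End FullBranches.

Section PullBack.

Variables (theta eta C_E : R) (tau : R -> R) (b : nat) (a : nat -> R)
  (E Einv : seqZ -> seqZ).
Hypothesis Htheta : 0 < theta < 1.
Hypothesis Heta_nonneg : 0 <= eta.
Hypothesis HCE_nonneg : 0 <= C_E.
Hypothesis Hfull : full_branches tau b a.
Hypothesis Hcontr : inverse_branches_contract tau b a eta.
Hypothesis HE_Omega : forall x, inOmega x -> inOmega (E x).
Hypothesis HEinv_Omega : forall x, inOmega x -> inOmega (Einv x).
Hypothesis HEinvE : forall x, inOmega x -> Einv (E x) = x.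
Hypothesis HEEinv : forall x, inOmega x -> E (Einv x) = x.
Hypothesis HEinv_lip : forall (n : Z) (x y : seqZ), inOmega x -> inOmega y ->
  dOmega theta (shiftZ n (Einv x)) (shiftZ n (Einv y))
    <= C_E * dOmega theta (shiftZ n x) (shiftZ n y).

Let T : seqZ -> seqZ := Tmap E tau.

Lemma Tmap_Omega (w : seqZ) : inOmega w -> inOmega (T w).
Proof. intros Hw. apply HE_Omega. now apply (taubar_Omega tau b a). Qed.

Lemma iter_Tmap_Omega (n : nat) (w : seqZ) : inOmega w ->
  inOmega (Nat.iter n T w).
Proof. intros Hw. induction n; simpl; auto using Tmap_Omega. Qed.

Lemma Tmap_preimage_contract (x y : seqZ) : inOmega x -> inOmega y ->
  exists z, inOmega z /\ T z = x /\
    dOmega theta z y <= eta * C_E * dOmega theta x (T y).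
Proof.
  intros Hx Hy.
  set (s := Einv x). assert (Hs : inOmega s) by now apply HEinv_Omega.
  set (t := taubar tau y). assert (Ht : inOmega t) by now apply (taubar_Omega tau b a).
  destruct (taubar_preimage_near tau b a eta Hfull Hcontr s y Hs Hy)
    as [z [Hz [Hzs Hzy]]].
  exists z. split; [exact Hz | split].
  - unfold T, Tmap. rewrite Hzs. now apply HEEinv.
  - assert (Hcoord : dOmega theta z y <= eta * dOmega theta s t)
      by now apply dOmega_coordinatewise_le.
    assert (Hlip : dOmega theta s t <= C_E * dOmega theta x (T y)).
    { pose proof (HEinv_lip 0%Z x (E t) Hx (HE_Omega t Ht)) as H.
      rewrite !shiftZ_0, HEinvE in H by exact Ht. exact H. }
    rewrite Rmult_assoc.
    apply Rle_trans with (1 := Hcoord).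
    now apply Rmult_le_compat_l.
Qed.

Lemma iter_preimage_contract (n : nat) (x y : seqZ) : inOmega x -> inOmega y ->
  exists z, inOmega z /\ Nat.iter n T z = x /\
    dOmega theta z y <= (eta * C_E) ^ n * dOmega theta x (Nat.iter n T y).
Proof.
  revert x y. induction n; intros x y Hx Hy.
  - exists x. simpl. split; [exact Hx | split; [reflexivity | lra]].
  - destruct (IHn x (T y) Hx (Tmap_Omega y Hy)) as [w [Hw [Hwx Hwd]]].
    destruct (Tmap_preimage_contract w y Hw Hy) as [z [Hz [Hzw Hzd]]].
    exists z. rewrite !Nat.iter_succ_r, Hzw.
    split; [exact Hz | split; [exact Hwx |]].
    apply Rle_trans with (1 := Hzd). simpl (_ ^ S n).
    rewrite (Rmult_assoc (eta * C_E) ((eta * C_E) ^ n)).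
    apply Rmult_le_compat_l; [nra | exact Hwd].
Qed.

End PullBack.

Theorem mainTheorem11
  (theta eta C_E : R) (tau : R -> R) (b : nat) (a : nat -> R)
  (E Einv : seqZ -> seqZ)
  (Htheta : 0 < theta < 1)
  (Heta : 0 < eta < 1)
  (Hfull : full_branches tau b a)
  (Hcontr : inverse_branches_contract tau b a eta)
  (HE_Omega : forall x, inOmega x -> inOmega (E x))
  (HEinv_Omega : forall x, inOmega x -> inOmega (Einv x))
  (HEinvE : forall x, inOmega x -> Einv (E x) = x)
  (HEEinv : forall x, inOmega x -> E (Einv x) = x)
  (HCE : 0 < C_E < / eta)
  (HEinv_lip : forall (n : Z) (x y : seqZ), inOmega x -> inOmega y ->
     dOmega theta (shiftZ n (Einv x)) (shiftZ n (Einv y))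
       <= C_E * dOmega theta (shiftZ n x) (shiftZ n y)) :
  forall x : seqZ, inOmega x ->
    forall y : seqZ, inOmega y -> forall eps : R, 0 < eps ->
      exists (n : nat) (z : seqZ),
        inOmega z /\ Nat.iter n (Tmap E tau) z = x /\ dOmega theta z y < eps.
Proof.
  intros x Hx y Hy eps Heps.
  set (q := eta * C_E).
  assert (Hq : 0 <= q < 1).
  { unfold q. split; [nra|].
    apply Rmult_lt_reg_l with (/ eta); [apply Rinv_0_lt_compat; lra|].
    rewrite <- Rmult_assoc, Rinv_l, Rmult_1_l, Rmult_1_r; lra. }
  destruct (pow_lt_1_zero q ltac:(rewrite Rabs_pos_eq; lra) eps Heps) as [N HN].
  specialize (HN N (le_n N)). rewrite Rabs_pos_eq in HN by (apply pow_le; lra).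
  destruct (iter_preimage_contract theta eta C_E tau b a E Einv Htheta
              ltac:(lra) ltac:(lra) Hfull Hcontr HE_Omega HEinv_Omega HEinvE
              HEEinv HEinv_lip N x y Hx Hy) as [z [Hz [HzN Hzd]]].
  exists N, z. split; [exact Hz | split; [exact HzN |]].
  pose proof (dOmega_le1 theta Htheta x _ Hx
    (iter_Tmap_Omega tau b a E Hfull HE_Omega N y Hy)) as Hd1.
  pose proof (pow_le q N (proj1 Hq)).
  fold q in Hzd. nra.
Qed.
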